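(* Let $G_1,G_2$ be cubic graphs, let $c_1\sim c_2$ be proper $3$-edge colorings of $G_1$ and $d_1\sim d_2$ proper $3$-edge colorings of $G_2$. Then $(c_1\,Y\,d_1)\sim(c_2\,Y\,d_2)$ in $G_1\,Y\,G_2$ and $(c_1\,H\,d_1)\sim(c_2\,H\,d_2)$ in $G_1\,H\,G_2$.
   Context: Graphs are finite; multiple edges allowed, loops not. Proper $3$-edge colorings use colors $\{1,2,3\}$, adjacent edges receiving different colors. For colors $a\neq b$, an edge-Kempe chain is a connected component of the subgraph of edges colored $a$ or $b$; an edge-Kempe switch swaps $a,b$ on one chain; $\sim$ denotes equivalence under finite sequences of such switches. Composition Y: choose $v_1\in G_1$ with incident edges $x_j=v_1s_{1j}$ and $v_2\in G_2$ with incident edges $y_j=v_2s_{2j}$ ($j=1,2,3$); $G_1\,Y\,G_2$ deletes $v_1,v_2$ and adds edges $s_{1j}s_{2j}$. Composition H: choose edges $x=s_{11}s_{12}\in G_1$, $y=s_{21}s_{22}\in G_2$; $G_1\,H\,G_2$ deletes $x,y$ and adds $s_{11}s_{21},s_{12}s_{22}$. For proper $3$-edge colorings $c$ of $G_1$, $d$ of $G_2$: let $\hat d$ be obtained from $d$ by a global color permutation with $\hat d(y_j)=c(x_j)$; $c\,Y\,d$ colors $G_1-v_1$ by $c$, $G_2-v_2$ by $\hat d$, and $s_{1j}s_{2j}$ by $c(x_j)$. Let $\tilde d$ be obtained from $d$ by a global color permutation with $\tilde d(y)=c(x)$; $c\,H\,d$ colors $G_1-x$ by $c$, $G_2-y$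 by $\tilde d$, and both new edges by $c(x)$. *)

From HB Require Import structures.
From mathcomp Require Import all_boot perm.
From Stdlib Require Import Relations.

Set Implicit Arguments.
Unset Strict Implicit.
Unset Printing Implicit Defensive.

Record mgraph := MGraph {
  vert : finType;
  edge : finType;
  src : edge -> vert;
  tgt : edge -> vert }.

Arguments src {m} _.
Arguments tgt {m} _.

Definition loopless (G : mgraph) : Prop := forall e : edge G, src e != tgt e.

Definition incident (G : mgraph) (v : vert G) (e : edge G) : bool :=
  (src e == v) || (tgt e == v).

Definition cubic (G : mgraph) : Prop :=
  forall v : vert G, #|[set e | incident v e]| = 3.

Definition share_end (G : mgraph) (e f : edge G) : bool :=
  [|| src e == src f, src e == tgt f, tgt e == src f | tgt e == tgt f].

Definition adjacent (G : mgraph) (e f : edge G) : bool :=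
  (e != f) && share_end e f.

(* edge colorings with colours {1,2,3}, represented by 'I_3 *)
Definition coloring (G : mgraph) := {ffun edge G -> 'I_3}.

Definition proper3 (G : mgraph) (c : coloring G) : Prop :=
  forall e f : edge G, adjacent e f -> c e != c f.

Definition kadj (G : mgraph) (c : coloring G) (a b : 'I_3) : rel (edge G) :=
  fun e f => [&& c e \in [:: a; b], c f \in [:: a; b] & share_end e f].

Definition swapc (a b k : 'I_3) : 'I_3 :=
  if k == a then b else if k == b then a else k.

Definition kempe_switch (G : mgraph) (c : coloring G) (a b : 'I_3) (e0 : edge G)
  : coloring G :=
  [ffun e => if connect (kadj c a b) e0 e then swapc a b (c e) else c e].

Definition kempe_step (G : mgraph) (c c' : coloring G) : Prop :=
  exists (a b : 'I_3) (e0 : edge G),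
    [/\ a != b, c e0 \in [:: a; b] & c' = kempe_switch c a b e0].

Definition kempe_equiv (G : mgraph) : relation (coloring G) :=
  clos_refl_trans (coloring G) (@kempe_step G).

Lemma ninc_src (G : mgraph) (v : vert G) (e : edge G) :
  ~~ incident v e -> src e != v.
Proof. by rewrite /incident negb_or => /andP[]. Qed.

Lemma ninc_tgt (G : mgraph) (v : vert G) (e : edge G) :
  ~~ incident v e -> tgt e != v.
Proof. by rewrite /incident negb_or => /andP[]. Qed.

Section Ycomp.
Variables (G1 G2 : mgraph) (v1 : vert G1) (v2 : vert G2).
(* s1 j, s2 j : the far ends of the edges x_j, y_j *)
Variables (s1 : 'I_3 -> {u : vert G1 | u != v1}) (s2 : 'I_3 -> {u : vert G2 | u != v2}).

Definition Yvert : finType := ({u : vert G1 | u != v1} + {u : vert G2 | u != v2})%type.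
Definition Yedge : finType :=
  ({e : edge G1 | ~~ incident v1 e} + {e : edge G2 | ~~ incident v2 e} + 'I_3)%type.

Definition Ysrc (e : Yedge) : Yvert :=
  match e with
  | inl (inl e1) => inl (exist _ (src (val e1)) (ninc_src (valP e1)))
  | inl (inr e2) => inr (exist _ (src (val e2)) (ninc_src (valP e2)))
  | inr j => inl (s1 j)
  end.

Definition Ytgt (e : Yedge) : Yvert :=
  match e with
  | inl (inl e1) => inl (exist _ (tgt (val e1)) (ninc_tgt (valP e1)))
  | inl (inr e2) => inr (exist _ (tgt (val e2)) (ninc_tgt (valP e2)))
  | inr j => inr (s2 j)
  end.

Definition Ycomp : mgraph := @MGraph Yvert Yedge Ysrc Ytgt.

(* c Y d, where sigma is the global colour permutation turning d into d-hat,
   and x j are the edges of G1 at v1 *)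
Definition Ycol (x : 'I_3 -> edge G1) (c : coloring G1) (d : coloring G2)
  (sigma : {perm 'I_3}) : coloring Ycomp :=
  [ffun e : Yedge => match e with
    | inl (inl e1) => c (val e1)
    | inl (inr e2) => sigma (d (val e2))
    | inr j => c (x j)
    end].
End Ycomp.

Section Hcomp.
Variables (G1 G2 : mgraph) (x : edge G1) (y : edge G2).
Variables (s11 s12 : vert G1) (s21 s22 : vert G2).

Definition Hvert : finType := (vert G1 + vert G2)%type.
Definition Hedge : finType :=
  ({e : edge G1 | e != x} + {e : edge G2 | e != y} + bool)%type.

Definition Hsrc (e : Hedge) : Hvert :=
  match e with
  | inl (inl e1) => inl (src (val e1))
  | inl (inr e2) => inr (src (val e2))
  | inr false => inl s11
  | inr true => inl s12
  end.

Definition Htgt (e : Hedge) : Hvert :=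
  match e with
  | inl (inl e1) => inl (tgt (val e1))
  | inl (inr e2) => inr (tgt (val e2))
  | inr false => inr s21
  | inr true => inr s22
  end.

Definition Hcomp : mgraph := @MGraph Hvert Hedge Hsrc Htgt.

(* c H d, with tau the global colour permutation turning d into d-tilde *)
Definition Hcol (c : coloring G1) (d : coloring G2) (tau : {perm 'I_3})
  : coloring Hcomp :=
  [ffun e : Hedge => match e with
    | inl (inl e1) => c (val e1)
    | inl (inr e2) => tau (d (val e2))
    | inr _ => c x
    end].
End Hcomp.

From mathcomp Require Import all_boot perm fingroup.
From Stdlib Require Import Relations.

Set Implicit Arguments.
Unset Strict Implicit.
Unset Printing Implicit Defensive.

(** Both compositions glue G1 and G2 (minus a vertex, resp. an edge) along a
   few bridge edges; on either side the bridges pairwise share an end, and a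
   coloring of the composite is c on the G1 side and a colour-permuted d on the
   G2 side.  A Kempe switch of c lifts to the composite: switch the same chain,
   and if the chain reaches a bridge, also swap the two colours on the whole G2
   side, which changes the permutation of d by a transposition.  Symmetrically
   switches of d lift.  The two resulting colorings then differ by a global
   colour permutation, which is a product of Kempe switches because a pair of
   colour classes is a union of Kempe chains, and by a permutation of the G2
   side fixing the bridge colours, which is a swap of the other two colours on
   the G2 side. *)

Lemma share_endC (G : mgraph) (e f : edge G) : share_end e f = share_end f e.
Proof.
rewrite /share_end (eq_sym (src f)) (eq_sym (tgt f)) (eq_sym (src f) (tgt e)).
by rewrite (eq_sym (tgt f) (tgt e)); congr (_ || _); exact: orbCA.
Qed.

Lemma share_end_at (G : mgraph) (v : vert G) (e f : edge G) :
  incident v e -> incident v f -> share_end e f.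
Proof.
by rewrite /incident /share_end => /orP[] /eqP-> /orP[] /eqP->; rewrite eqxx ?orbT.
Qed.

Section Colours.
Implicit Types (a b k : 'I_3) (pi : {perm 'I_3}).

Lemma swapcE a b k : swapc a b k = tperm a b k.
Proof.
rewrite /swapc; case: tpermP => [->|->|/eqP/negbTE-> /eqP/negbTE->] //.
  by rewrite eqxx.
by rewrite eqxx; case: eqP.
Qed.

Lemma tperm_notin a b k : k \notin [:: a; b] -> tperm a b k = k.
Proof. by rewrite !inE negb_or => /andP[? ?]; rewrite tpermD // eq_sym. Qed.

Lemma tperm_fixed a b k : a != b -> tperm a b k = k -> k \notin [:: a; b].
Proof.
move=> neq_ab; case: tpermP => [->|->|/eqP ? /eqP ? _].
- by move/eqP; rewrite eq_sym (negbTE neq_ab).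
- by move/eqP; rewrite (negbTE neq_ab).
- by rewrite !inE negb_or; apply/andP.
Qed.

Lemma mem_tperm a b k : (tperm a b k \in [:: a; b]) = (k \in [:: a; b]).
Proof. by case: tpermP => [->|->|_ _]; rewrite !inE ?eqxx ?orbT. Qed.

Lemma mem_perm pi a b k : (pi k \in [:: pi a; pi b]) = (k \in [:: a; b]).
Proof. by rewrite !inE !(inj_eq perm_inj). Qed.

Lemma perm_tperm pi a b k : pi (tperm a b k) = tperm (pi a) (pi b) (pi k).
Proof. by rewrite -tpermJ permJ. Qed.

Lemma ord3_cases (z u v w : 'I_3) :
  u != v -> u != w -> v != w -> [|| z == u, z == v | z == w].
Proof.
by case: u v w z => [[|[|[|//]]] ?] [[|[|[|//]]] ?] [[|[|[|//]]] ?] [[|[|[|//]]] ?].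
Qed.

Lemma perm3_fixpoint pi k :
  pi k = k -> pi = 1%g \/ exists a b, a != b /\ pi = tperm a b.
Proof.
move=> pik; case: (pickP (fun j => pi j != j)) => [j pij | pi_id]; last first.
  by left; apply/permP => j; rewrite perm1; apply/eqP/negbFE/pi_id.
right; exists j, (pi j); split; first by rewrite eq_sym.
have neq_kj : k != j by apply: contraNneq pij => <-; rewrite pik.
have neq_kpij : k != pi j by rewrite -{1}pik (inj_eq perm_inj).
have neq_jpij : j != pi j by rewrite eq_sym.
have pi2j : pi (pi j) = j.
  have := ord3_cases (pi (pi j)) neq_kj neq_kpij neq_jpij.
  rewrite -{1}pik !(inj_eq perm_inj) eq_sym (negbTE neq_kpij) (negbTE pij) orbF.
  by move=> /eqP.
apply/permP => i; case/or3P: (ord3_cases i neq_kj neq_kpij neq_jpij) => /eqP->.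
- by rewrite pik tpermD // eq_sym.
- by rewrite tpermL.
- by rewrite tpermR.
Qed.

End Colours.

Section KempeSwitching.
Variable G : mgraph.
Implicit Types (c : coloring G) (a b : 'I_3) (S : {set edge G}).

Definition swap_on c a b S : coloring G :=
  [ffun e => if e \in S then tperm a b (c e) else c e].

Definition recolor (pi : {perm 'I_3}) c : coloring G := [ffun e => pi (c e)].

Lemma kadj_sym c a b : ssrbool.symmetric (kadj c a b).
Proof. by move=> e f; rewrite /kadj share_endC andbCA. Qed.

Lemma kadj_closed c a b S :
  (forall e f, e \in S -> kadj c a b e f -> f \in S) -> closed (kadj c a b) S.
Proof. by move=> clS e f ef; apply/idP/idP => /clS; apply; rewrite // kadj_sym. Qed.

Lemma kadj_swap_on c a b S : kadj (swap_on c a b S) a b =2 kadj c a b.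
Proof. by move=> e f; rewrite /kadj !ffunE; do 2!case: ifP; rewrite ?mem_tperm. Qed.

Lemma connect_kadj_mem c a b e f :
  connect (kadj c a b) e f -> c e \in [:: a; b] -> c f \in [:: a; b].
Proof.
case/connectP => q /[swap] -> {f}.
by elim: q e => [|f q IHq] e //= /andP[/and3P[_ cf _] /IHq ->].
Qed.

Lemma kempe_switchE c a b e0 :
  kempe_switch c a b e0 = swap_on c a b [set e | connect (kadj c a b) e0 e].
Proof. by apply/ffunP => e; rewrite !ffunE inE swapcE. Qed.

Lemma kempe_equiv_swap_on c a b S :
  a != b -> {in S, forall e, c e \in [:: a; b]} -> closed (kadj c a b) S ->
  kempe_equiv c (swap_on c a b S).
Proof.
move=> neq_ab; have [n] := ubnP #|S|; elim: n c S => // n IHn c S /ltnSE-leSn Sab clS.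
have [S0 | [e0 Se0]] := set_0Vmem S.
  suff -> : swap_on c a b S = c by exact: rt_refl.
  by apply/ffunP => e; rewrite ffunE S0 inE.
pose C := [set e | connect (kadj c a b) e0 e].
have CS e : e \in C -> e \in S by rewrite inE => /(closed_connect clS) <-.
have clC : closed (kadj c a b) C.
  by move=> e f /(connect_closed (sym_connect_sym (@kadj_sym c a b)) e0) eqef; rewrite !inE.
apply: (rt_trans _ _ _ (kempe_switch c a b e0)).
  by apply: rt_step; exists a, b, e0; split => //; exact: Sab.
have -> : swap_on c a b S = swap_on (kempe_switch c a b e0) a b (S :\: C).
  apply/ffunP => e; rewrite kempe_switchE !ffunE !inE.
  have /implyP := CS e; rewrite inE.
  by case: (connect _ e0 e) => //= ->.
apply: IHn.
- apply: leq_trans leSn; rewrite -(cardsID C S) -add1n leq_add2r card_gt0.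
  by apply/set0Pn; exists e0; rewrite !inE connect0 Se0.
- by move=> e /setDP[/Sab ce]; rewrite inE ffunE => /negbTE ->.
- move=> e f; rewrite kempe_switchE kadj_swap_on => ef.
  by rewrite !in_setD (clS _ _ ef) (clC _ _ ef).
Qed.

Lemma kempe_equiv_recolor (pi : {perm 'I_3}) c : kempe_equiv c (recolor pi c).
Proof.
have [ts -> dts] := prod_tpermP pi; elim: ts c dts => [|[a b] ts IH] c.
  move=> _; rewrite big_nil; suff -> : recolor 1 c = c by exact: rt_refl.
  by apply/ffunP => e; rewrite ffunE perm1.
rewrite big_cons /= => /andP[neq_ab dts].
set rho := (\prod_(t <- ts) _)%g.
have -> : recolor (tperm a b * rho) c = recolor rho (recolor (tperm a b) c).
  by apply/ffunP => e; rewrite !ffunE permM.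
apply: (rt_trans _ _ _ _ _ _ (IH _ dts)).
have -> : recolor (tperm a b) c = swap_on c a b [set e | c e \in [:: a; b]].
  by apply/ffunP => e; rewrite !ffunE inE; case: ifP => // /negbT /tperm_notin.
apply: kempe_equiv_swap_on => // [e | e f /and3P[ce cf _]]; first by rewrite inE.
by rewrite !in_set ce cf.
Qed.

End KempeSwitching.

Definition preserves_share_end (K G : mgraph) (p : edge K -> option (edge G)) :=
  forall e f e' f', p e = Some e' -> p f = Some f' -> share_end e f -> share_end e' f'.

Definition bridges_share_end (K G G' : mgraph)
    (p : edge K -> option (edge G)) (q : edge K -> option (edge G')) :=
  forall e f e' f', p e = Some e' -> p f = Some f' -> q e -> q f -> share_end e' f'.

(* [p1] and [p2] identify each edge of [K] with an edge of [G1], of [G2] or,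
   for the bridges between the two sides, of both. *)
Record gluing (K G1 G2 : mgraph)
    (p1 : edge K -> option (edge G1)) (p2 : edge K -> option (edge G2)) : Prop := Gluing {
  gluing_cover : forall e, p1 e || p2 e;
  gluing_share1 : preserves_share_end p1;
  gluing_share2 : preserves_share_end p2;
  gluing_bridges1 : bridges_share_end p1 p2;
  gluing_bridges2 : bridges_share_end p2 p1;
  gluing_apart : forall e f, p1 e = None -> p2 f = None -> ~~ share_end e f }.

Definition glued (K G1 G2 : mgraph)
    (p1 : edge K -> option (edge G1)) (p2 : edge K -> option (edge G2))
    (k : coloring K) (c : coloring G1) (sigma : {perm 'I_3})
    (d : coloring G2) (tau : {perm 'I_3}) : Prop :=
  (forall e f, p1 e = Some f -> k e = sigma (c f)) /\
  (forall e f, p2 e = Some f -> k e = tau (d f)).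

Lemma gluing_sym (K G1 G2 : mgraph) p1 p2 :
  @gluing K G1 G2 p1 p2 -> gluing p2 p1.
Proof.
case=> cover sh1 sh2 br1 br2 apart; split => // [e | e f p2e p1f].
  by rewrite orbC.
by rewrite share_endC apart.
Qed.

Lemma glued_sym (K G1 G2 : mgraph) p1 p2 k c sigma d tau :
  @glued K G1 G2 p1 p2 k c sigma d tau -> glued p2 p1 k d tau c sigma.
Proof. by case. Qed.

Section Gluing.
Variables (K G1 G2 : mgraph).
Variables (p1 : edge K -> option (edge G1)) (p2 : edge K -> option (edge G2)).
Hypothesis glP : gluing p1 p2.
Implicit Types (k : coloring K) (c : coloring G1) (d : coloring G2) (sigma tau : {perm 'I_3}).

Lemma glued_eq k k' c sigma d tau :
  glued p1 p2 k c sigma d tau -> glued p1 p2 k' c sigma d tau -> k = k'.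
Proof.
move=> [gl1 gl2] [gl1' gl2']; apply/ffunP => e.
have := gluing_cover glP e; case p1e: (p1 e) => [f|] /=.
  by rewrite (gl1 _ _ p1e) (gl1' _ _ p1e).
by case p2e: (p2 e) => [g|] // _; rewrite (gl2 _ _ p2e) (gl2' _ _ p2e).
Qed.

Lemma glued_recolor pi k c sigma d tau :
  glued p1 p2 k c sigma d tau -> glued p1 p2 (recolor pi k) c (sigma * pi) d (tau * pi).
Proof. by move=> [gl1 gl2]; split => e f pe; rewrite ffunE permM ?(gl1 _ _ pe) ?(gl2 _ _ pe). Qed.

Lemma share_end_p2 e f : p1 e = None -> share_end e f -> p2 f.
Proof.
by move=> p1e; apply: contraLR; case p2f: (p2 f) => // _; apply: gluing_apart p1e p2f.
Qed.

Section SwitchLeft.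
Variables (k : coloring K) (c : coloring G1) (sigma : {perm 'I_3}).
Variables (d : coloring G2) (tau : {perm 'I_3}) (a b : 'I_3) (e0 : edge G1).
Hypotheses (neq_ab : a != b) (ce0 : c e0 \in [:: a; b]).
Hypothesis glk : glued p1 p2 k c sigma d tau.

Let chain := connect (kadj c a b) e0.
Let hit := [exists e, p2 e && oapp chain false (p1 e)].
(* Lifted switch: the chain on the G1 side and, if it reaches a bridge, the two
   colours on the whole G2 side. *)
Let moved e := if p1 e is Some f then chain f else hit.
Let S := [set e | moved e && (k e \in [:: sigma a; sigma b])].
Let k' := swap_on k (sigma a) (sigma b) S.
Let tau' := if hit then (tau * tperm (sigma a) (sigma b))%g else tau.

Lemma hit_chain e f : hit -> p1 e = Some f -> p2 e -> c f \in [:: a; b] -> chain f.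
Proof.
case/existsP => e' /andP[p2e' hite'] p1e p2e cf; move: hite'.
case p1e': (p1 e') => [f'|] //= chainf'.
have cf' := connect_kadj_mem chainf' ce0; apply: connect_trans chainf' (connect1 _).
rewrite /kadj cf cf' /=.
exact: (gluing_bridges1 glP p1e' p1e p2e' p2e).
Qed.

Lemma switched_movedE e : k' e = if moved e then tperm (sigma a) (sigma b) (k e) else k e.
Proof.
rewrite ffunE inE; case: (moved e) => //=; case: ifP => // /negbT.
by move/tperm_notin.
Qed.

Lemma glued_switched : glued p1 p2 k' (kempe_switch c a b e0) sigma d tau'.
Proof.
have [gl1 gl2] := glk; split.
- move=> e f p1e; rewrite switched_movedE /moved p1e ffunE swapcE (gl1 _ _ p1e).
  by rewrite -/chain; case: (chain f); rewrite ?perm_tperm.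
- move=> e g p2e; rewrite switched_movedE /moved.
  have -> : tau' (d g) = if hit then tperm (sigma a) (sigma b) (k e) else k e.
    by rewrite /tau'; case: ifP; rewrite ?permM (gl2 _ _ p2e).
  case p1e: (p1 e) => [f|] //; have [chainf | nchainf] := boolP (chain f).
    by rewrite ifT //; apply/existsP; exists e; rewrite p2e p1e.
  have [hitT | //] := boolP hit; rewrite (gl1 _ _ p1e).
  have p2e' : p2 e by rewrite p2e.
  by rewrite tperm_notin // mem_perm; apply: contra (hit_chain hitT p1e p2e') nchainf.
Qed.

Lemma kempe_equiv_switched : kempe_equiv k k'.
Proof.
have mem1 e e' : p1 e = Some e' -> (k e \in [:: sigma a; sigma b]) = (c e' \in [:: a; b]).
  by move=> p1e; rewrite (glk.1 _ _ p1e) mem_perm.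
apply: kempe_equiv_swap_on; first by rewrite (inj_eq perm_inj).
  by move=> e; rewrite in_set => /andP[].
apply: kadj_closed => e f; rewrite !in_set /moved => /andP[movede _] /and3P[ke kf ef].
rewrite kf andbT; move: movede.
case p1e: (p1 e) => [e'|]; case p1f: (p1 f) => [f'|] //.
- move=> chaine'; apply: connect_trans chaine' (connect1 _).
  rewrite /kadj -(mem1 _ _ p1e) -(mem1 _ _ p1f) ke kf.
  exact: (gluing_share1 glP p1e p1f ef).
- move=> chaine'; apply/existsP; exists e; rewrite p1e /= chaine' andbT.
  by apply: (share_end_p2 p1f); rewrite share_endC.
- rewrite (mem1 _ _ p1f) in kf.
  by move=> hitT; apply: (hit_chain hitT p1f (share_end_p2 p1e ef) kf).
Qed.

End SwitchLeft.

Lemma glued_switch_left k c sigma d tau a b e0 :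
  a != b -> c e0 \in [:: a; b] -> glued p1 p2 k c sigma d tau ->
  exists tau' k', glued p1 p2 k' (kempe_switch c a b e0) sigma d tau' /\ kempe_equiv k k'.
Proof.
move=> neq_ab ce0 glk; do 2!eexists.
by split; [apply: glued_switched ce0 glk | apply: kempe_equiv_switched neq_ab ce0 glk].
Qed.

Lemma glued_kempe_left k c c' sigma d tau :
  kempe_equiv c c' -> glued p1 p2 k c sigma d tau ->
  exists tau' k', glued p1 p2 k' c' sigma d tau' /\ kempe_equiv k k'.
Proof.
move=> cc'; elim: cc' k tau => [c1 c2 [a [b [e0 [neq_ab ce0 ->]]]] | c1 |
                                c1 c2 c3 _ IH12 _ IH23] k tau gl.
- exact: glued_switch_left gl.
- by exists tau, k; split; last exact: rt_refl.
- have [tau2 [k2 [gl2 k12]]] := IH12 _ _ gl.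
  have [tau3 [k3 [gl3 k23]]] := IH23 _ _ gl2.
  by exists tau3, k3; split; last exact: rt_trans k12 k23.
Qed.

Lemma glued_swap_right k k' c sigma d tau a b :
  a != b -> glued p1 p2 k c sigma d tau -> glued p1 p2 k' c sigma d (tau * tperm a b) ->
  kempe_equiv k k'.
Proof.
move=> neq_ab [gl1 gl2] [gl1' gl2'].
have bridge_notin e f g : p1 e = Some f -> p2 e = Some g -> k e \notin [:: a; b].
  move=> p1e p2e; apply: tperm_fixed neq_ab _.
  by rewrite (gl2 _ _ p2e) -permM -(gl2' _ _ p2e) (gl1' _ _ p1e) -(gl1 _ _ p1e) (gl2 _ _ p2e).
pose S := [set e | (p1 e == None) && (k e \in [:: a; b])].
suff -> : k' = swap_on k a b S.
  apply: kempe_equiv_swap_on => // [e | ]; first by rewrite in_set => /andP[].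
  apply: kadj_closed => e f; rewrite !in_set => /andP[/eqP p1e _] /and3P[_ kf ef].
  rewrite kf andbT; case p1f: (p1 f) => [f'|] //.
  case p2f: (p2 f) (share_end_p2 p1e ef) => [g|] // _.
  by rewrite (negbTE (bridge_notin _ _ _ p1f p2f)) in kf.
apply/ffunP => e; rewrite ffunE in_set.
case p1e: (p1 e) => [f|] /=; first by rewrite (gl1' _ _ p1e) (gl1 _ _ p1e).
have := gluing_cover glP e; rewrite p1e; case p2e: (p2 e) => [g|] // _.
rewrite (gl2' _ _ p2e) permM -(gl2 _ _ p2e).
by case: ifP => // /negbT /tperm_notin.
Qed.

Lemma glued_perm_right k k' c sigma d tau tau' e0 f0 g0 :
  p1 e0 = Some f0 -> p2 e0 = Some g0 ->
  glued p1 p2 k c sigma d tau -> glued p1 p2 k' c sigma d tau' -> kempe_equiv k k'.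
Proof.
move=> p1e0 p2e0 gl gl'.
have fix0 : (tau^-1 * tau')%g (tau (d g0)) = tau (d g0).
  rewrite permM permK -(gl'.2 _ _ p2e0) (gl'.1 _ _ p1e0).
  by rewrite -(gl.1 _ _ p1e0) (gl.2 _ _ p2e0).
move: gl'; rewrite -(mulKVg tau tau'); move: (tau^-1 * tau')%g fix0 => pi.
case/perm3_fixpoint => [-> | [a [b [neq_ab ->]]]] gl'.
  by rewrite mulg1 in gl'; rewrite (glued_eq gl gl'); exact: rt_refl.
exact: glued_swap_right neq_ab gl gl'.
Qed.

End Gluing.

Lemma glued_kempe_right (K G1 G2 : mgraph) p1 p2 k c sigma d d' tau :
  @gluing K G1 G2 p1 p2 -> kempe_equiv d d' -> glued p1 p2 k c sigma d tau ->
  exists sigma' k', glued p1 p2 k' c sigma' d' tau /\ kempe_equiv k k'.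
Proof.
move=> glP dd' /glued_sym gl.
have [sigma' [k' [/glued_sym gl' kk']]] := glued_kempe_left (gluing_sym glP) dd' gl.
by exists sigma', k'.
Qed.

Theorem glued_kempe_equiv (K G1 G2 : mgraph) p1 p2 e0 f0 g0
    (k1 k2 : coloring K) c1 c2 d1 d2 sigma1 sigma2 tau1 tau2 :
  @gluing K G1 G2 p1 p2 -> p1 e0 = Some f0 -> p2 e0 = Some g0 ->
  kempe_equiv c1 c2 -> kempe_equiv d1 d2 ->
  glued p1 p2 k1 c1 sigma1 d1 tau1 -> glued p1 p2 k2 c2 sigma2 d2 tau2 ->
  kempe_equiv k1 k2.
Proof.
move=> glP p1e0 p2e0 c12 d12 gl1 gl2.
have [tau [k [gl k1k]]] := glued_kempe_left glP c12 gl1.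
have [sigma [k' [gl' kk']]] := glued_kempe_right glP d12 gl.
pose pi := (sigma^-1 * sigma2)%g.
have := glued_recolor pi gl'; rewrite mulKVg => gl''.
apply: (rt_trans _ _ _ k); first exact: k1k.
apply: (rt_trans _ _ _ k'); first exact: kk'.
apply: (rt_trans _ _ _ _ _ (kempe_equiv_recolor pi k')).
exact: (glued_perm_right glP p1e0 p2e0 gl'' gl2).
Qed.

Section YGluing.
Variables (G1 G2 : mgraph) (v1 : vert G1) (v2 : vert G2).
Variables (x : 'I_3 -> edge G1) (y : 'I_3 -> edge G2).
Variables (s1 : 'I_3 -> {u : vert G1 | u != v1}) (s2 : 'I_3 -> {u : vert G2 | u != v2}).
Hypothesis x_ends : forall j, (src (x j) = v1 /\ tgt (x j) = val (s1 j)) \/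
                              (tgt (x j) = v1 /\ src (x j) = val (s1 j)).
Hypothesis y_ends : forall j, (src (y j) = v2 /\ tgt (y j) = val (s2 j)) \/
                              (tgt (y j) = v2 /\ src (y j) = val (s2 j)).

Notation YG := (Ycomp s1 s2).

Definition Yleft (e : Yedge v1 v2) : option (edge G1) :=
  match e with inl (inl e1) => Some (val e1) | inl (inr _) => None | inr j => Some (x j) end.

Definition Yright (e : Yedge v1 v2) : option (edge G2) :=
  match e with inl (inl _) => None | inl (inr e2) => Some (val e2) | inr j => Some (y j) end.

Lemma Y_incident_left j : incident v1 (x j) && incident (val (s1 j)) (x j).
Proof. by rewrite /incident; case: (x_ends j) => -[-> ->]; rewrite !eqxx ?orbT. Qed.

Lemma Y_incident_right j : incident v2 (y j) && incident (val (s2 j)) (y j).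
Proof. by rewrite /incident; case: (y_ends j) => -[-> ->]; rewrite !eqxx ?orbT. Qed.

Lemma Y_share_left_bridge e1 j :
  share_end (G := YG) (inl (inl e1)) (inr j) -> share_end (val e1) (x j).
Proof.
have inlE (u : {u | u != v1}) w : (inl u == inl w :> Yvert v1 v2) = (val u == val w) by [].
rewrite /share_end /= !inlE orbF => e1_s1j.
have [_ xj] := andP (Y_incident_left j); exact: share_end_at e1_s1j xj.
Qed.

Lemma Y_share_right_bridge e2 j :
  share_end (G := YG) (inl (inr e2)) (inr j) -> share_end (val e2) (y j).
Proof.
have inrE (u : {u | u != v2}) w : (inr u == inr w :> Yvert v1 v2) = (val u == val w) by [].
rewrite /share_end /= !inrE /= => e2_s2j.
have [_ yj] := andP (Y_incident_right j); exact: share_end_at e2_s2j yj.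
Qed.

Lemma Y_share_bridges_left j k : share_end (x j) (x k).
Proof.
have [xj _] := andP (Y_incident_left j); have [xk _] := andP (Y_incident_left k).
exact: share_end_at xj xk.
Qed.

Lemma Y_share_bridges_right j k : share_end (y j) (y k).
Proof.
have [yj _] := andP (Y_incident_right j); have [yk _] := andP (Y_incident_right k).
exact: share_end_at yj yk.
Qed.

Lemma Y_gluing : gluing (K := YG) Yleft Yright.
Proof.
split.
- by move=> [[e1|e2]|j].
- move=> [[e1|e2]|j] [[f1|f2]|k] //= _ _ [<-] [<-] //.
  + exact: Y_share_left_bridge.
  + by rewrite share_endC => /Y_share_left_bridge; rewrite share_endC.
  + by rewrite Y_share_bridges_left.
- move=> [[e1|e2]|j] [[f1|f2]|k] //= _ _ [<-] [<-] //.
  + exact: Y_share_right_bridge.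
  + by rewrite share_endC => /Y_share_right_bridge; rewrite share_endC.
  + by rewrite Y_share_bridges_right.
- by move=> [[e1|e2]|j] [[f1|f2]|k] //= _ _ [<-] [<-] _ _; exact: Y_share_bridges_left.
- by move=> [[e1|e2]|j] [[f1|f2]|k] //= _ _ [<-] [<-] _ _; exact: Y_share_bridges_right.
- by move=> [[e1|e2]|j] [[f1|f2]|k].
Qed.

Lemma Ycol_glued (c : coloring G1) (d : coloring G2) (sigma : {perm 'I_3}) :
  (forall j, sigma (d (y j)) = c (x j)) ->
  glued (K := YG) Yleft Yright (Ycol s1 s2 x c d sigma) c 1 d sigma.
Proof. by move=> compat; split=> -[[e1|e2]|j] f //= [<-]; rewrite ffunE ?perm1. Qed.

End YGluing.

Section HGluing.
Variables (G1 G2 : mgraph) (x : edge G1) (y : edge G2).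
Variables (s11 s12 : vert G1) (s21 s22 : vert G2).
Hypothesis x_ends : (src x = s11 /\ tgt x = s12) \/ (src x = s12 /\ tgt x = s11).
Hypothesis y_ends : (src y = s21 /\ tgt y = s22) \/ (src y = s22 /\ tgt y = s21).

Definition Hleft (e : Hedge x y) : option (edge G1) :=
  match e with inl (inl e1) => Some (val e1) | inl (inr _) => None | inr _ => Some x end.

Definition Hright (e : Hedge x y) : option (edge G2) :=
  match e with inl (inl _) => None | inl (inr e2) => Some (val e2) | inr _ => Some y end.

Notation HG := (Hcomp x y s11 s12 s21 s22).

Lemma H_incident_left : incident s11 x && incident s12 x.
Proof. by rewrite /incident; case: x_ends => -[-> ->]; rewrite !eqxx ?orbT. Qed.

Lemma H_incident_right : incident s21 y && incident s22 y.
Proof. by rewrite /incident; case: y_ends => -[-> ->]; rewrite !eqxx ?orbT. Qed.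

Lemma H_share_left_bridge e1 i :
  share_end (G := HG) (inl (inl e1)) (inr i) -> share_end (val e1) x.
Proof.
have inlE u w : (inl u == inl w :> Hvert G1 G2) = (u == w) by [].
have [inc11 inc12] := andP H_incident_left.
by rewrite /share_end; case: i => /=; rewrite !inlE /= ?orbF => /share_end_at; apply.
Qed.

Lemma H_share_right_bridge e2 i :
  share_end (G := HG) (inl (inr e2)) (inr i) -> share_end (val e2) y.
Proof.
have inrE u w : (inr u == inr w :> Hvert G1 G2) = (u == w) by [].
have [inc21 inc22] := andP H_incident_right.
by rewrite /share_end; case: i => /=; rewrite !inrE /= => /share_end_at; apply.
Qed.

Lemma H_gluing : gluing (K := HG) Hleft Hright.
Proof.
have xx : share_end x x by rewrite /share_end eqxx.
have yy : share_end y y by rewrite /share_end eqxx.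
split.
- by move=> [[e1|e2]|i].
- move=> [[e1|e2]|i] [[f1|f2]|j] //= _ _ [<-] [<-] //.
  + exact: H_share_left_bridge.
  + by rewrite share_endC => /H_share_left_bridge; rewrite share_endC.
- move=> [[e1|e2]|i] [[f1|f2]|j] //= _ _ [<-] [<-] //.
  + exact: H_share_right_bridge.
  + by rewrite share_endC => /H_share_right_bridge; rewrite share_endC.
- by move=> [[e1|e2]|i] [[f1|f2]|j] //= _ _ [<-] [<-].
- by move=> [[e1|e2]|i] [[f1|f2]|j] //= _ _ [<-] [<-].
- by move=> [[e1|e2]|i] [[f1|f2]|j].
Qed.

Lemma Hcol_glued (c : coloring G1) (d : coloring G2) (tau : {perm 'I_3}) :
  tau (d y) = c x -> glued (K := HG) Hleft Hright (Hcol x y s11 s12 s21 s22 c d tau) c 1 d tau.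
Proof. by move=> compat; split=> -[[e1|e2]|i] f //= [<-]; rewrite ffunE ?perm1. Qed.

End HGluing.

Theorem lemma10 :
  (forall (G1 G2 : mgraph) (v1 : vert G1) (v2 : vert G2)
     (x : 'I_3 -> edge G1) (y : 'I_3 -> edge G2)
     (s1 : 'I_3 -> {u : vert G1 | u != v1}) (s2 : 'I_3 -> {u : vert G2 | u != v2})
     (c1 c2 : coloring G1) (d1 d2 : coloring G2) (sigma1 sigma2 : {perm 'I_3}),
     loopless G1 -> loopless G2 -> cubic G1 -> cubic G2 ->
     injective x -> injective y ->
     (forall j, (src (x j) = v1 /\ tgt (x j) = val (s1 j)) \/
                (tgt (x j) = v1 /\ src (x j) = val (s1 j))) ->
     (forall j, (src (y j) = v2 /\ tgt (y j) = val (s2 j)) \/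
                (tgt (y j) = v2 /\ src (y j) = val (s2 j))) ->
     proper3 c1 -> proper3 c2 -> proper3 d1 -> proper3 d2 ->
     kempe_equiv c1 c2 -> kempe_equiv d1 d2 ->
     (forall j, sigma1 (d1 (y j)) = c1 (x j)) ->
     (forall j, sigma2 (d2 (y j)) = c2 (x j)) ->
     @kempe_equiv (Ycomp s1 s2) (Ycol s1 s2 x c1 d1 sigma1) (Ycol s1 s2 x c2 d2 sigma2))
  /\
  (forall (G1 G2 : mgraph) (x : edge G1) (y : edge G2)
     (s11 s12 : vert G1) (s21 s22 : vert G2)
     (c1 c2 : coloring G1) (d1 d2 : coloring G2) (tau1 tau2 : {perm 'I_3}),
     loopless G1 -> loopless G2 -> cubic G1 -> cubic G2 ->
     (src x = s11 /\ tgt x = s12) \/ (src x = s12 /\ tgt x = s11) ->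
     (src y = s21 /\ tgt y = s22) \/ (src y = s22 /\ tgt y = s21) ->
     proper3 c1 -> proper3 c2 -> proper3 d1 -> proper3 d2 ->
     kempe_equiv c1 c2 -> kempe_equiv d1 d2 ->
     tau1 (d1 y) = c1 x -> tau2 (d2 y) = c2 x ->
     @kempe_equiv (Hcomp x y s11 s12 s21 s22)
       (Hcol x y s11 s12 s21 s22 c1 d1 tau1) (Hcol x y s11 s12 s21 s22 c2 d2 tau2)).
Proof.
split.
- move=> G1 G2 v1 v2 x y s1 s2 c1 c2 d1 d2 sigma1 sigma2 _ _ _ _ _ _ x_ends y_ends _ _ _ _.
  move=> c12 d12 compat1 compat2.
  exact: (glued_kempe_equiv (K := Ycomp s1 s2) (e0 := inr ord0) (Y_gluing x_ends y_ends)
            erefl erefl c12 d12 (Ycol_glued s1 s2 compat1) (Ycol_glued s1 s2 compat2)).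
- move=> G1 G2 x y s11 s12 s21 s22 c1 c2 d1 d2 tau1 tau2 _ _ _ _ x_ends y_ends _ _ _ _.
  move=> c12 d12 compat1 compat2.
  exact: (glued_kempe_equiv (K := Hcomp x y s11 s12 s21 s22) (e0 := inr false)
            (H_gluing x_ends y_ends) erefl erefl c12 d12
            (Hcol_glued s11 s12 s21 s22 compat1) (Hcol_glued s11 s12 s21 s22 compat2)).
Qed.
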